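(* Let $a\in\mathbb{C}_p$, $a\neq0$, $A=|a|_p$, and $f(x)=\frac{ax}{x^2+a}$, whose unique fixed point is $x_0=0$ (with $f'(0)=1$). Then: 1.1) The maximal Siegel disk of $f$ centered at $0$ is $SI(0)=U_{\sqrt A}(0)$. 1.2) $\mathcal P\subset S_{\sqrt A}(0)$. 2) If $r>\sqrt A$ and $x\in S_r(0)$, then $f^n(x)\in S_{A/r}(0)$ for all $n\ge1$. 3) Let $x\in S_{\sqrt A}(0)\setminus\mathcal P$ and $A^*(x)=|f(x)|_p$. 3.1) If $A^*(x)=\sqrt A$ then $f(x)\in S_{\sqrt A}(0)$. 3.2) If $A^*(x)>\sqrt A$ then $f^n(x)\in S_{A/A^*(x)}(0)$ for all $n\ge 2$.
   Context: For $c\in\mathbb{C}_p$, $r>0$: $U_r(c)=\{x:|x-c|_p<r\}$, $V_r(c)=\{x:|x-c|_p\le r\}$, $S_r(c)=\{x:|x-c|_p=r\}$. $f$ is defined on $\mathbb{C}_p\setminus\{\pm\sqrt{-a}\}$ and $\mathcal P=\{x\in\mathbb{C}_p:\ \exists n\in\mathbb{N}\cup\{0\},\ f^n(x)\in\{\sqrt{-a},-\sqrt{-a}\}\}$. A sphere $S_\rho(x_0)$ is invariant if $x\in S_\rho(x_0)$ implies $f^n(x)\in S_\rho(x_0)$ for all $n\ge1$. A ball $U_r(x_0)$ is a Siegel disk if every sphere $S_\rho(x_0)$ with $\rho<r$ is invariant; the maximal Siegel disk $SI(x_0)$ is the union of all Siegel disks centered at $x_0$. *)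

From HB Require Import structures.
From mathcomp Require Import all_boot all_order all_algebra.
Set Implicit Arguments. Unset Strict Implicit. Unset Printing Implicit Defensive.
Import Order.TTheory GRing.Theory Num.Theory.
Local Open Scope ring_scope.

Definition nonarch_abs (K : fieldType) (R : realFieldType) (v : K -> R) : Prop :=
  [/\ forall x, 0 <= v x,
      forall x, v x = 0 <-> x = 0,
      forall x y, v (x * y) = v x * v y
    & forall x y, v (x + y) <= Num.max (v x) (v y)].

Definition cauchy_seq (K : fieldType) (R : realFieldType) (v : K -> R)
  (u : nat -> K) : Prop :=
  forall eps : R, 0 < eps -> exists N : nat, forall m n : nat,
    (N <= m)%N -> (N <= n)%N -> v (u m - u n) < eps.

Definition converges_to (K : fieldType) (R : realFieldType) (v : K -> R)
  (u : nat -> K) (l : K) : Prop :=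
  forall eps : R, 0 < eps -> exists N : nat, forall n : nat,
    (N <= n)%N -> v (u n - l) < eps.

Definition complete_abs (K : fieldType) (R : realFieldType) (v : K -> R) : Prop :=
  forall u, cauchy_seq v u -> exists l, converges_to v u l.

(* the function f(x) = a x / (x^2 + a); total, with the MathComp convention
   y / 0 = 0 at the two poles x = ±sqrt(-a) *)
Definition fa (K : fieldType) (a : K) (x : K) : K := a * x / (x ^+ 2 + a).

Definition sphere (K : fieldType) (R : realFieldType) (v : K -> R) (c : K) (rho : R) :=
  fun x : K => v (x - c) = rho.
Definition open_ball (K : fieldType) (R : realFieldType) (v : K -> R) (c : K) (r : R) :=
  fun x : K => v (x - c) < r.

Definition invariant_sphere (K : fieldType) (R : realFieldType) (v : K -> R)
  (f : K -> K) (c : K) (rho : R) : Prop :=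
  forall x, sphere v c rho x -> forall n : nat, (1 <= n)%N -> sphere v c rho (iter n f x).

Definition siegel_disk (K : fieldType) (R : realFieldType) (v : K -> R)
  (f : K -> K) (c : K) (r : R) : Prop :=
  0 < r /\ forall rho : R, 0 < rho -> rho < r -> invariant_sphere v f c rho.

Definition max_siegel (K : fieldType) (R : realFieldType) (v : K -> R)
  (f : K -> K) (c : K) : K -> Prop :=
  fun x => exists r : R, siegel_disk v f c r /\ open_ball v c r x.

(* the set P: points some iterate of which is one of ±sqrt(-a), i.e. a root of y^2 = -a *)
Definition preimg_poles (K : fieldType) (a : K) : K -> Prop :=
  fun x => exists n : nat, (iter n (fa a) x) ^+ 2 = - a.

From HB Require Import structures.
From mathcomp Require Import all_boot all_order all_algebra.
Import Order.TTheory GRing.Theory Num.Theory.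
Local Open Scope ring_scope.

(* By the ultrametric inequality, |y^2 + a| = A when |y|^2 < A and |y^2 + a| = |y|^2
   when |y|^2 > A, so |f(y)| = |y| inside U_{sqrt A}(0) and |f(y)| = A/|y| outside
   the closed ball; since (A/|y|)^2 < A, one step from outside lands inside, where
   |.| is preserved forever.  The sphere S_{sqrt A}(0) is not invariant because it
   contains the roots of y^2 = -a, which f sends to 0. *)

Section NonarchimedeanAbsoluteValue.
Context {K : fieldType} {R : realFieldType} {v : K -> R}.
Hypothesis v_abs : nonarch_abs v.

Lemma absv_ge0 x : 0 <= v x. Proof. by case: v_abs. Qed.

Lemma absv_eq0 x : (v x == 0) = (x == 0).
Proof. by case: v_abs => _ v0 _ _; apply/eqP/eqP => /v0. Qed.

Lemma absv_gt0 x : (0 < v x) = (x != 0).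
Proof. by rewrite lt_def absv_ge0 andbT absv_eq0. Qed.

Lemma absv0 : v 0 = 0. Proof. by apply/eqP; rewrite absv_eq0. Qed.

Lemma absvM x y : v (x * y) = v x * v y. Proof. by case: v_abs. Qed.

Lemma absv_max x y : v (x + y) <= Num.max (v x) (v y). Proof. by case: v_abs. Qed.

Lemma absv1 : v 1 = 1.
Proof.
have v1_neq0 : v 1 != 0 by rewrite absv_eq0 oner_eq0.
by apply: (mulfI v1_neq0); rewrite -absvM !mulr1.
Qed.

Lemma absvN x : v (- x) = v x.
Proof.
have vN1_sqr : v (-1) ^+ 2 = 1 ^+ 2 by rewrite expr2 -absvM mulrNN mulr1 absv1 expr1n.
have vN1 : v (-1) = 1 by apply/eqP; rewrite -(eqrXn2 (n := 2)) ?absv_ge0 ?vN1_sqr.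
by rewrite -mulN1r absvM vN1 mul1r.
Qed.

Lemma absvV x : v x^-1 = (v x)^-1.
Proof.
have [->|x_neq0] := eqVneq x 0; first by rewrite invr0 absv0 invr0.
have vx_neq0 : v x != 0 by rewrite absv_eq0.
by apply: (mulfI vx_neq0); rewrite -absvM mulfV // mulfV // absv1.
Qed.

Lemma absvX x n : v (x ^+ n) = v x ^+ n.
Proof. by elim: n => [|n IHn]; rewrite ?absv1 // !exprS absvM IHn. Qed.

Lemma absvD_ltr x y : v y < v x -> v (x + y) = v x.
Proof.
move=> vy_lt_vx; apply/eqP; rewrite eq_le.
have -> : v (x + y) <= v x by rewrite (le_trans (absv_max x y)) // ge_max lexx ltW.
have := absv_max (x + y) (- y).
by rewrite addrK absvN le_max (leNgt (v x) (v y)) vy_lt_vx orbF.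
Qed.

End NonarchimedeanAbsoluteValue.

Lemma sqr_div_lt (R : realFieldType) (c t : R) :
  0 < c -> 0 < t -> c < t ^+ 2 -> (c / t) ^+ 2 < c.
Proof.
move=> c_gt0 t_gt0 c_lt_tt.
have ct_gt0 : 0 < c / t by rewrite divr_gt0.
have ct_lt_t : c / t < t by rewrite ltr_pdivrMr // -expr2.
by rewrite expr2 -{3}(divfK (lt0r_neq0 t_gt0) c) ltr_pM2l.
Qed.

Section DynamicsOfFa.
Context {K : fieldType} {R : realFieldType} {v : K -> R} {a : K}.
Hypotheses (v_abs : nonarch_abs v) (va_gt0 : 0 < v a).

Lemma absv_gt0_outside y : v a < v y ^+ 2 -> 0 < v y.
Proof.
move=> outside; rewrite lt_def absv_ge0 // andbT.
by apply: contraTneq outside => ->; rewrite expr0n /= -leNgt ltW.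
Qed.

Lemma absv_fa y : v (fa a y) = v a * v y / v (y ^+ 2 + a).
Proof. by rewrite /fa absvM // absvM // absvV. Qed.

Lemma absv_fa_inside y : v y ^+ 2 < v a -> v (fa a y) = v y.
Proof.
move=> inside; rewrite absv_fa addrC absvD_ltr ?(absvX v_abs y 2) //.
by rewrite mulrAC divff ?mul1r ?lt0r_neq0.
Qed.

Lemma absv_fa_outside y : v a < v y ^+ 2 -> v (fa a y) = v a / v y.
Proof.
move=> outside; rewrite absv_fa absvD_ltr ?(absvX v_abs y 2) //.
by rewrite expr2 invfM mulrA mulfK ?lt0r_neq0 ?absv_gt0_outside.
Qed.

Lemma absv_iter_fa_inside n y : v y ^+ 2 < v a -> v (iter n (fa a) y) = v y.
Proof. by move=> inside; elim: n => //= n IHn; rewrite absv_fa_inside IHn. Qed.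

Lemma absv_iter_fa_outside n y :
  v a < v y ^+ 2 -> v (iter n.+1 (fa a) y) = v a / v y.
Proof.
move=> outside; rewrite iterSr absv_iter_fa_inside absv_fa_outside //.
exact/sqr_div_lt/outside/absv_gt0_outside.
Qed.

Lemma absv_pole_preimage n x : (iter n (fa a) x) ^+ 2 = - a -> v x ^+ 2 = v a.
Proof.
move=> /(congr1 v); rewrite absvX // absvN // => pole.
case: (ltgtP (v x ^+ 2) (v a)) => // [inside|outside].
  by move: pole; rewrite absv_iter_fa_inside // => /eqP; rewrite lt_eqF.
case: n pole => [/eqP|n]; first by rewrite gt_eqF.
rewrite absv_iter_fa_outside // => /eqP.
by rewrite lt_eqF // sqr_div_lt // absv_gt0_outside.
Qed.

End DynamicsOfFa.

Lemma closed_sqr_surj {K : closedFieldType} (c : K) : exists y : K, y ^+ 2 = c.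
Proof.
have [y y2] := @solve_monicpoly K 2 (fun i => if i == 0%N then c else 0) isT.
by exists y; rewrite y2 big_ord_recl big_ord1 /= mulr1 mul0r addr0.
Qed.

Section SiegelDiskOfFa.
Context {K : closedFieldType} {R : rcfType} {v : K -> R} {a : K}.
Hypotheses (v_abs : nonarch_abs v) (a_neq0 : a != 0).

Local Notation s := (Num.sqrt (v a)).

Let va_gt0 : 0 < v a. Proof. by rewrite absv_gt0. Qed.

Lemma absv_lt_sqrt y : (v y < s) = (v y ^+ 2 < v a).
Proof. by rewrite -ltr_sqr ?nnegrE ?sqrtr_ge0 ?(absv_ge0 v_abs) // sqr_sqrtr // ltW. Qed.

Lemma absv_gt_sqrt y : (s < v y) = (v a < v y ^+ 2).
Proof. by rewrite -ltr_sqr ?nnegrE ?sqrtr_ge0 ?(absv_ge0 v_abs) // sqr_sqrtr // ltW. Qed.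

Lemma siegel_disk_fa : siegel_disk v (fa a) 0 s.
Proof.
split=> [|rho _ rho_lt_s x]; first by rewrite sqrtr_gt0.
rewrite /sphere subr0 => vx n _.
by rewrite subr0 absv_iter_fa_inside // -absv_lt_sqrt vx.
Qed.

Lemma preimg_poles_sphere x : preimg_poles a x -> sphere v 0 s x.
Proof.
case=> n /(absv_pole_preimage v_abs va_gt0) vx2.
by rewrite /sphere subr0 -vx2 sqrtr_sqr ger0_norm // absv_ge0.
Qed.

Lemma invariant_sphere_fa_lt rho x :
  invariant_sphere v (fa a) 0 rho -> sphere v 0 rho x -> rho < s.
Proof.
move=> inv x_rho; have := inv x x_rho 1%N isT.
move: x_rho; rewrite /sphere !subr0 /= => vx.
case: (ltgtP rho s) => // [s_lt_rho | rho_eq_s _].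
- have outside : v a < v x ^+ 2 by rewrite -absv_gt_sqrt vx.
  rewrite absv_fa_outside // vx => /(congr1 (fun t => t * rho)).
  rewrite divfK ?lt0r_neq0 ?(lt_trans _ s_lt_rho) ?sqrtr_gt0 // => va.
  by move: outside; rewrite vx va expr2 ltxx.
- (* a root of y^2 = -a lies on the sphere S_{sqrt A}(0) and is sent to 0 *)
  have [y y2] := closed_sqr_surj (- a).
  have /(inv y) /(_ 1%N isT) : sphere v 0 rho y.
    by rewrite rho_eq_s; apply: preimg_poles_sphere; exists 0%N.
  rewrite /sphere /= /fa y2 addNr invr0 mulr0 subr0 absv0 // => rho0.
  by move: (sqrtr_gt0 (v a)); rewrite va_gt0 -rho_eq_s -rho0 ltxx.
Qed.

Lemma max_siegel_faE x : max_siegel v (fa a) 0 x <-> open_ball v 0 s x.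
Proof.
split=> [[r [[_ inv] x_r]] | x_s]; last by exists s; split; first exact: siegel_disk_fa.
move: x_r; rewrite /open_ball !subr0 => vx_lt_r.
have := absv_ge0 v_abs x; rewrite le_eqVlt => /orP[/eqP <- | vx_gt0].
  by rewrite sqrtr_gt0.
by apply: (invariant_sphere_fa_lt _ x (inv _ vx_gt0 vx_lt_r)); rewrite /sphere subr0.
Qed.

Lemma iter_fa_sphere_outside r x n :
  s < r -> sphere v 0 r x -> sphere v 0 (v a / r) (iter n.+1 (fa a) x).
Proof.
rewrite /sphere !subr0 => s_lt_r vx.
by rewrite -vx absv_iter_fa_outside // -absv_gt_sqrt vx.
Qed.

End SiegelDiskOfFa.

Theorem theorem2p4 (p : nat) (K : closedFieldType) (R : rcfType) (v : K -> R)
  (p_prime : prime p) (char0 : [pchar K] =i pred0)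
  (v_abs : nonarch_abs v) (v_complete : complete_abs v)
  (v_p : v (p%:R) = (p%:R)^-1)
  (a : K) (a_neq0 : a != 0) :
  let A := v a in
  let f := fa a in
  (* 1.1 *)
  (forall x, max_siegel v f 0 x <-> open_ball v 0 (Num.sqrt A) x) /\
  (* 1.2 *)
  (forall x, preimg_poles a x -> sphere v 0 (Num.sqrt A) x) /\
  (* 2 *)
  (forall (r : R) (x : K), Num.sqrt A < r -> sphere v 0 r x ->
     forall n : nat, (1 <= n)%N -> sphere v 0 (A / r) (iter n f x)) /\
  (* 3 *)
  (forall x : K, sphere v 0 (Num.sqrt A) x -> ~ preimg_poles a x ->
     let Astar := v (f x) in
     (Astar = Num.sqrt A -> sphere v 0 (Num.sqrt A) (f x)) /\
     (Num.sqrt A < Astar ->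
        forall n : nat, (2 <= n)%N -> sphere v 0 (A / Astar) (iter n f x))).
Proof.
move=> A f; split; [|split; [|split]].
- exact: max_siegel_faE.
- exact: preimg_poles_sphere.
- by move=> r x s_lt_r x_r [|n] // _; apply: iter_fa_sphere_outside.
- move=> x _ _; split=> [fx_s | s_lt_fx [|[|n]] // _]; first by rewrite /sphere subr0.
  by rewrite iterSr; apply: iter_fa_sphere_outside => //; rewrite /sphere subr0.
Qed.
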